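(* Let $L$ be any linear order. The following are equivalent: (1) $ML/\!\sim_\omega\;\cong M$ for every linear order $M$; (2) $L/\!\sim_\omega\;\cong 1$ and ($\operatorname{cf}(L)=\omega_1$ or $\operatorname{cf}^*(L)=\omega_1$); (3) $L/\!\sim_\omega\;\cong 1$ and ($L$ has no countable tail or $L$ has no countable head); (4) $L$ embeds into $U$ and $L$ has a strictly monotone sequence of length $\omega_1$; (5) $L$ is isomorphic to an uncountable suborder of $U$.
   Context: The countable condensation $\sim_\omega$ on a linear order $L$: $x\sim_\omega y$ iff the closed interval between $x$ and $y$ is countable; $L/\!\sim_\omega$ is the linear order of its classes (which are intervals). $ML$ denotes the lexicographic product: the linear order obtained by replacing each element $m\in M$ by a copy $L_m$ of $L$ (order on $M\times L$ compared first by the $M$-coordinate). $\operatorname{cf}(L)$ is the least length of a strictly increasing cofinal sequence in $L$; $\operatorname{cf}^*(L)$ the least length of a strictly decreasing coinitial sequence. A tail of $L$ is a final segment $T$ with $L=L'+T$; a head is an initial segment $H$ with $L=H+L'$. $U$ is the linear order $R^*+\mathbb{Q}+R$, where $R$ is obtained from $\omega_1$ by replacing each $\alpha<\omega_1$ with a point $u_\alpha$ followed by a copy $\mathbb{Q}(\alpha)$ of the rationals (so $u_\alpha<\mathbb{Q}(\alpha)<u_{\alpha+1}$), $R^*$ is the reverse of $R$, and the middle $\mathbb{Q}$ is a copy of the rationals. *)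

From mathcomp Require Import all_boot all_order all_algebra.
Import Order.TTheory GRing.Theory Num.Theory.

Set Implicit Arguments.
Unset Strict Implicit.
Unset Printing Implicit Defensive.

Definition strict_linear (T : Type) (lt : T -> T -> Prop) : Prop :=
  (forall x, ~ lt x x) /\
  (forall x y z, lt x y -> lt y z -> lt x z) /\
  (forall x y, lt x y \/ x = y \/ lt y x).

Definition leo (T : Type) (lt : T -> T -> Prop) (x y : T) : Prop :=
  lt x y \/ x = y.

Definition countable_set (T : Type) (A : T -> Prop) : Prop :=
  exists f : T -> nat, forall a b, A a -> A b -> f a = f b -> a = b.

Definition incr (A B : Type) (ltA : A -> A -> Prop) (ltB : B -> B -> Prop)
  (f : A -> B) : Prop := forall x y, ltA x y -> ltB (f x) (f y).

Definition decr (A B : Type) (ltA : A -> A -> Prop) (ltB : B -> B -> Prop)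
  (f : A -> B) : Prop := forall x y, ltA x y -> ltB (f y) (f x).

Definition order_iso (A B : Type) (ltA : A -> A -> Prop) (ltB : B -> B -> Prop)
  : Prop :=
  exists f : A -> B,
    (forall x y, f x = f y -> x = y) /\ (forall b, exists a, f a = b) /\
    (forall x y, ltA x y <-> ltB (f x) (f y)).

Definition order_embeds (A B : Type) (ltA : A -> A -> Prop)
  (ltB : B -> B -> Prop) : Prop :=
  exists f : A -> B, forall x y, ltA x y <-> ltB (f x) (f y).

Definition rev_lt (T : Type) (lt : T -> T -> Prop) (x y : T) : Prop := lt y x.

Definition one_lt (x y : unit) : Prop := False.

(** lexicographic product ML on M * L (compare first by the M-coordinate) *)
Definition lex_lt (M L : Type) (ltM : M -> M -> Prop) (ltL : L -> L -> Prop)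
  (p q : M * L) : Prop :=
  ltM p.1 q.1 \/ (p.1 = q.1 /\ ltL p.2 q.2).

Definition sum_lt (A B : Type) (ltA : A -> A -> Prop) (ltB : B -> B -> Prop)
  (p q : A + B) : Prop :=
  match p, q with
  | inl a, inl a' => ltA a a'
  | inl _, inr _ => True
  | inr _, inl _ => False
  | inr b, inr b' => ltB b b'
  end.

Definition sub_lt (T : Type) (lt : T -> T -> Prop) (S : T -> Prop)
  (x y : {t : T | S t}) : Prop := lt (proj1_sig x) (proj1_sig y).

Definition cint (T : Type) (lt : T -> T -> Prop) (x y : T) (z : T) : Prop :=
  (leo lt x z /\ leo lt z y) \/ (leo lt y z /\ leo lt z x).

Definition csim (T : Type) (lt : T -> T -> Prop) (x y : T) : Prop :=
  countable_set (cint lt x y).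

Definition cclass (T : Type) (lt : T -> T -> Prop) : Type :=
  {C : T -> Prop | exists x, C = csim lt x}.

(** order of classes (which are intervals): C < D iff C <> D and some
    element of C lies below some element of D *)
Definition cclass_lt (T : Type) (lt : T -> T -> Prop) (C D : cclass lt)
  : Prop :=
  proj1_sig C <> proj1_sig D /\
  exists x y, proj1_sig C x /\ proj1_sig D y /\ lt x y.

Definition cquot_iso (T M : Type) (lt : T -> T -> Prop) (ltM : M -> M -> Prop)
  : Prop := order_iso (cclass_lt (lt:=lt)) ltM.

Definition well_order (T : Type) (lt : T -> T -> Prop) : Prop :=
  strict_linear lt /\ well_founded lt.

Definition is_omega1 (W : Type) (ltW : W -> W -> Prop) : Prop :=
  well_order ltW /\ ~ countable_set (fun _ : W => True) /\
  forall w, countable_set (fun v => ltW v w).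

Definition cofinal (A L : Type) (ltL : L -> L -> Prop) (f : A -> L) : Prop :=
  forall y : L, exists a, leo ltL y (f a).

Definition cf_omega1 (W : Type) (ltW : W -> W -> Prop)
  (L : Type) (ltL : L -> L -> Prop) : Prop :=
  (exists f : W -> L, incr ltW ltL f /\ cofinal ltL f) /\
  forall (A : Type) (ltA : A -> A -> Prop),
    well_order ltA -> countable_set (fun _ : A => True) ->
    ~ exists f : A -> L, incr ltA ltL f /\ cofinal ltL f.

Definition cfstar_omega1 (W : Type) (ltW : W -> W -> Prop)
  (L : Type) (ltL : L -> L -> Prop) : Prop :=
  cf_omega1 ltW (rev_lt ltL).

Definition is_tail (L : Type) (lt : L -> L -> Prop) (T : L -> Prop) : Prop :=
  (exists x, T x) /\ forall x y, T x -> lt x y -> T y.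

Definition is_head (L : Type) (lt : L -> L -> Prop) (H : L -> Prop) : Prop :=
  (exists x, H x) /\ forall x y, H y -> lt x y -> H x.

(** R: each alpha < omega_1 replaced by u_alpha (None) followed by a copy
    Q(alpha) of the rationals (Some q). *)
Definition ptQ_lt (a b : option rat) : Prop :=
  match a, b with
  | None, Some _ => True
  | Some q, Some q' => (q < q')%R
  | _, _ => False
  end.

Definition R_lt (W : Type) (ltW : W -> W -> Prop) : W * option rat -> W * option rat -> Prop :=
  lex_lt ltW ptQ_lt.

Definition rat_lt (q q' : rat) : Prop := (q < q')%R.

Definition U_type (W : Type) : Type :=
  ((W * option rat) + (rat + (W * option rat)))%type.

Definition U_lt (W : Type) (ltW : W -> W -> Prop) : U_type W -> U_type W -> Prop :=
  sum_lt (rev_lt (R_lt ltW)) (sum_lt rat_lt (R_lt ltW)).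

(* L / ~omega = 1 means that all bounded intervals of L are countable.  In such
   an L a tail is uncountable exactly when it carries a cofinal
   omega1-sequence, which gives (2) <-> (3).  In ML two points of different
   copies of L are ~omega-equivalent iff the tail and head of L lying between
   them are countable, so (3) -> (1); conversely M = 1 forces L / ~omega = 1
   and M = omega forbids L countable.  A cofinal omega1-sequence cuts L into
   countable blocks, each embeddable in Q, hence embeds the part of L above its
   first point into R; the part below is countable (sent to the middle Q) or
   carries a coinitial omega1-sequence (sent to R^* ).  Bounded intervals of U
   are countable, which gives (4) -> (3), and an uncountable suborder of U
   meets R or R^* uncountably and so contains an omega1-sequence, which gives
   (5) -> (4). *)

From mathcomp Require Import all_boot all_order all_algebra.
From Stdlib Require Import Classical ClassicalEpsilon.
From Stdlib Require Import FunctionalExtensionality PropExtensionality ProofIrrelevance.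
From mathcomp Require Import lra.
Import Order.TTheory GRing.Theory Num.Theory.

Set Implicit Arguments.
Unset Strict Implicit.
Unset Printing Implicit Defensive.

Definition classicb (P : Prop) : bool :=
  if excluded_middle_informative P then true else false.

Lemma classicbP (P : Prop) : reflect P (classicb P).
Proof. by rewrite /classicb; case: excluded_middle_informative => p; constructor. Qed.

Section Countable.
Variable T : Type.
Implicit Types A B : T -> Prop.

Lemma countable_sub A B :
  (forall x, A x -> B x) -> countable_set B -> countable_set A.
Proof. by move=> AB [f f_inj]; exists f => a b /AB Ba /AB Bb; apply: f_inj. Qed.

Lemma countable_preimage (U : Type) A (B : U -> Prop) (f : T -> U) :
  (forall a, A a -> B (f a)) ->
  (forall a b, A a -> A b -> f a = f b -> a = b) ->
  countable_set B -> countable_set A.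
Proof.
move=> AB f_inj [g g_inj]; exists (g \o f) => a b Aa Ab /g_inj eq_fab.
exact/f_inj/eq_fab/AB/Ab/AB.
Qed.

Lemma countable_countType (K : countType) A (h : T -> K) :
  (forall a b, A a -> A b -> h a = h b -> a = b) -> countable_set A.
Proof.
move=> h_inj; apply: (@countable_preimage K A (fun _ => True) h) => //.
by exists pickle => a b _ _; apply: (pcan_inj (@pickleK K)).
Qed.

Lemma countable_set1 (x : T) : countable_set (fun y => y = x).
Proof. by exists (fun _ => 0%N) => a b -> ->. Qed.

Lemma countable_bigcup (I : Type) (J : I -> Prop) (A : I -> T -> Prop) :
  countable_set J -> (forall i, J i -> countable_set (A i)) ->
  countable_set (fun x => exists i, J i /\ A i x).
Proof.
move=> [g g_inj] cA.
have [[x0 [i0 _]]|empty] := classic (exists x i, J i /\ A i x); last first.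
  by exists (fun _ => 0%N) => a b Ha; case: empty; exists a.
have inhF : inhabited (T -> nat) by constructor; exact: (fun _ => 0%N).
have inhI : inhabited I by constructor; exact: i0.
pose inj_on i (f : T -> nat) :=
  J i -> forall a b, A i a -> A i b -> f a = f b -> a = b.
pose F i := epsilon inhF (inj_on i).
have F_inj i : inj_on i (F i).
  apply: epsilon_spec; have [Ji|nJi] := classic (J i).
    by have [f f_inj] := cA i Ji; exists f => _.
  by exists (fun _ => 0%N) => /nJi.
pose ix x := epsilon inhI (fun i => J i /\ A i x).
have ixP x : (exists i, J i /\ A i x) -> J (ix x) /\ A (ix x) x.
  exact: (epsilon_spec inhI (fun i => J i /\ A i x)).
apply: (@countable_countType (nat * nat)%type _ (fun x => (g (ix x), F (ix x) x))).
move=> a b /ixP [Ja Aa] /ixP [Jb Ab] [/(g_inj _ _ Ja Jb) eq_ix].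
by rewrite eq_ix in Aa *; apply: F_inj.
Qed.

Lemma countable_union A B :
  countable_set A -> countable_set B -> countable_set (fun x => A x \/ B x).
Proof.
move=> cA cB.
apply: (@countable_sub _ (fun x => exists b : bool, True /\ if b then A x else B x)).
  by move=> x [Ax|Bx]; [exists true|exists false].
apply: countable_bigcup => [|[]] //.
by exists nat_of_bool => [[] []].
Qed.

End Countable.

Lemma countable_image (T U : Type) (A : T -> Prop) (f : T -> U) :
  countable_set A -> countable_set (fun y => exists a, A a /\ f a = y).
Proof.
move=> cA; apply: (countable_bigcup (A := fun a y => f a = y)) => // a _.
by exists (fun _ => 0%N) => ? ? <- <-.
Qed.

Section Linear.
Variables (X : Type) (lt : X -> X -> Prop) (HX : strict_linear lt).

Lemma lin_irr x : ~ lt x x.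
Proof. by case: HX. Qed.

Lemma lin_trans x y z : lt x y -> lt y z -> lt x z.
Proof. by case: HX => _ [lt_trans _]; apply: lt_trans. Qed.

Lemma lin_tri x y : lt x y \/ x = y \/ lt y x.
Proof. by case: HX => _ [_]; apply. Qed.

Lemma lin_asym x y : lt x y -> ~ lt y x.
Proof. by move=> xy /(lin_trans xy); apply: lin_irr. Qed.

Lemma leo_of_nlt x y : ~ lt x y -> leo lt y x.
Proof. by rewrite /leo; case: (lin_tri x y) => [|[->|]]; tauto. Qed.

Lemma leo_antisym x y : leo lt x y -> leo lt y x -> x = y.
Proof. by case=> [xy [/(lin_asym xy) []|//]|]. Qed.

Lemma rev_lin : strict_linear (rev_lt lt).
Proof.
split; [exact: lin_irr|split; rewrite /rev_lt].
- by move=> x y z yx zy; apply: lin_trans zy yx.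
- by move=> x y; case: (lin_tri x y); tauto.
Qed.

End Linear.

Lemma incr_on_iff (X Y : Type) (lt : X -> X -> Prop) (ltY : Y -> Y -> Prop)
    (P : X -> Prop) (f : X -> Y) :
  strict_linear lt -> strict_linear ltY ->
  (forall x y, P x -> P y -> lt x y -> ltY (f x) (f y)) ->
  forall x y, P x -> P y -> (lt x y <-> ltY (f x) (f y)).
Proof.
move=> HX HY f_incr x y Px Py; split; first exact: f_incr.
case: (lin_tri HX x y) => [//|[-> /(lin_irr HY)|yx /(lin_asym HY)]] //.
by case; apply: f_incr.
Qed.

Lemma lex_lin (M L : Type) (ltM : M -> M -> Prop) (ltL : L -> L -> Prop) :
  strict_linear ltM -> strict_linear ltL -> strict_linear (lex_lt ltM ltL).
Proof.
move=> HM HL; split; [|split].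
- by move=> [m l] [/(lin_irr HM)|[_ /(lin_irr HL)]].
- move=> [a1 a2] [b1 b2] [c1 c2]; rewrite /lex_lt /=.
  case=> [ab|[<- ab]] [bc|[<- bc]].
  + by left; exact: (lin_trans HM ab bc).
  + by left.
  + by left.
  + by right; split => //; exact: (lin_trans HL ab bc).
- move=> [a1 a2] [b1 b2]; rewrite /lex_lt /=.
  case: (lin_tri HM a1 b1) => [|[<-|]]; try tauto.
  by case: (lin_tri HL a2 b2) => [|[<-|]]; tauto.
Qed.

Lemma sum_lin (A B : Type) (ltA : A -> A -> Prop) (ltB : B -> B -> Prop) :
  strict_linear ltA -> strict_linear ltB -> strict_linear (sum_lt ltA ltB).
Proof.
move=> HA HB; split; [|split].
- by move=> [a|b] /=; [exact: (lin_irr HA)|exact: (lin_irr HB)].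
- by move=> [a|b] [a'|b'] [a''|b''] //=; [exact: (lin_trans HA)|exact: (lin_trans HB)].
- move=> [a|b] [a'|b'] /=; try tauto.
  + by case: (lin_tri HA a a') => [|[->|]]; tauto.
  + by case: (lin_tri HB b b') => [|[->|]]; tauto.
Qed.

Lemma rat_lin : strict_linear rat_lt.
Proof.
rewrite /rat_lt; split; [|split].
- by move=> x; rewrite ltxx.
- by move=> x y z; apply: lt_trans.
- by move=> x y; case: (ltgtP x y) => [|_|->]; [left|right; right|right; left].
Qed.

Lemma ptQ_lin : strict_linear ptQ_lt.
Proof.
split; [|split].
- by move=> [q|] //=; exact: (lin_irr rat_lin).
- by move=> [q|] [q'|] [q''|] //=; exact: (lin_trans rat_lin).
- move=> [q|] [q'|] /=; try tauto.
  by case: (lin_tri rat_lin q q') => [|[->|]]; tauto.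
Qed.

Lemma one_lin : strict_linear one_lt.
Proof. split; [by move=> []|split; [by []|by move=> [] []; right; left]]. Qed.

Lemma nat_lin : strict_linear (fun m n : nat => (m < n)%N).
Proof.
split; [|split].
- by move=> n; rewrite ltnn.
- by move=> m n p; apply: ltn_trans.
- by move=> m n; case: (ltngtP m n) => [|_|->]; [left|right; right|right; left].
Qed.

Lemma head_rev (X : Type) (lt : X -> X -> Prop) (H : X -> Prop) :
  is_head lt H <-> is_tail (rev_lt lt) H.
Proof. by split=> [[? head_H]|[? tail_H]]; split=> // x y; eauto. Qed.

Lemma cint_sym (X : Type) (lt : X -> X -> Prop) x y z :
  cint lt x y z -> cint lt y x z.
Proof. by rewrite /cint; tauto. Qed.

Lemma cint_rev (X : Type) (lt : X -> X -> Prop) x y z :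
  cint (rev_lt lt) x y z <-> cint lt x y z.
Proof. by rewrite /cint /leo /rev_lt; split=> H; intuition subst; tauto. Qed.

Lemma leo_rev (X : Type) (lt : X -> X -> Prop) x y :
  leo (rev_lt lt) x y <-> leo lt y x.
Proof. by rewrite /leo /rev_lt; split=> [[|->]|[|->]]; by [left|right]. Qed.

Lemma tail_above (X : Type) (lt : X -> X -> Prop) x0 :
  strict_linear lt -> is_tail lt (fun x => leo lt x0 x).
Proof.
move=> HX; split; first by exists x0; right.
by move=> x y [x0x|<-] xy; left => //; exact: (lin_trans HX x0x xy).
Qed.

Lemma head_below (X : Type) (lt : X -> X -> Prop) x0 :
  strict_linear lt -> is_head lt (fun x => leo lt x x0).
Proof.
move=> HX; split; first by exists x0; right.
by move=> x y [yx0|->] xy; left => //; exact: (lin_trans HX xy yx0).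
Qed.

Lemma uncountable_strict_ub (X : Type) (lt : X -> X -> Prop) (P : X -> Prop) :
  strict_linear lt -> ~ countable_set P ->
  (forall c, countable_set (fun x => P x /\ leo lt x c)) ->
  forall C, countable_set C -> exists x, forall c, C c -> lt c x.
Proof.
move=> HX P_unc P_low C cC; apply: NNPP => no_ub; apply: P_unc.
apply: (countable_sub (B := fun x => exists c, C c /\ P x /\ leo lt x c)).
  move=> x Px; apply: NNPP => not_below; apply: no_ub; exists x => c Cc.
  by apply: NNPP => /(leo_of_nlt HX) xc; apply: not_below; exists c.
exact: countable_bigcup.
Qed.

Definition one_class (X : Type) (lt : X -> X -> Prop) : Prop :=
  forall x y, csim lt x y.

Lemma one_class_rev (X : Type) (lt : X -> X -> Prop) :
  one_class lt -> one_class (rev_lt lt).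
Proof. by move=> one x y; apply: countable_sub (one x y) => z /cint_rev. Qed.

Definition cclass_of (X : Type) (lt : X -> X -> Prop) (x : X) : cclass lt :=
  exist _ (csim lt x) (ex_intro _ x erefl).

Lemma cclass_inj (X : Type) (lt : X -> X -> Prop) (C D : cclass lt) :
  proj1_sig C = proj1_sig D -> C = D.
Proof.
by case: C D => [c pc] [d pd] /= eq_cd; subst d; rewrite (proof_irrelevance _ pc pd).
Qed.

Lemma one_class_cclass_eq (X : Type) (lt : X -> X -> Prop) :
  one_class lt -> forall C D : cclass lt, C = D.
Proof.
move=> one [C [x eq_C]] [D [y eq_D]]; apply: cclass_inj => /=.
rewrite eq_C eq_D; apply: functional_extensionality => z.
exact: propositional_extensionality.
Qed.

Section OneClass.
Variables (X : Type) (lt : X -> X -> Prop) (HX : strict_linear lt).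

Lemma csim_refl x : csim lt x x.
Proof.
apply: countable_sub (countable_set1 x) => z.
by case=> [] [[xz|<-] [zx|//]] //; case: (lin_asym HX xz zx).
Qed.

Lemma cquot_one_iff : cquot_iso lt one_lt <-> inhabited X /\ one_class lt.
Proof.
split.
- move=> [F [F_inj [F_surj _]]]; split.
    by case: (F_surj tt) => [[C [x _]] _]; constructor.
  move=> x y; have /(f_equal (@proj1_sig _ _)) /= -> : cclass_of lt x = cclass_of lt y.
    by apply: F_inj; case: (F _); case: (F _).
  exact: csim_refl.
- move=> [[x0] one]; exists (fun _ => tt); split; [|split].
  + by move=> C D _; apply: one_class_cclass_eq.
  + by case; exists (cclass_of lt x0).
  + move=> C D; split=> // [[neq _]]; apply: neq.
    by rewrite (one_class_cclass_eq one C D).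
Qed.

End OneClass.

Section Embedding.
Variables (X Y : Type) (ltX : X -> X -> Prop) (ltY : Y -> Y -> Prop).
Hypotheses (HX : strict_linear ltX) (HY : strict_linear ltY).
Variables (e : X -> Y) (e_iff : forall x y, ltX x y <-> ltY (e x) (e y)).

Lemma embedding_inj x y : e x = e y -> x = y.
Proof.
move=> exy; case: (lin_tri HX x y) => [|[//|]] /e_iff;
  by rewrite exy => /(lin_irr HY).
Qed.

Lemma embedding_leo x y : leo ltX x y -> leo ltY (e x) (e y).
Proof. by case=> [/e_iff|->]; [left|right]. Qed.

Lemma one_class_embedding : one_class ltY -> one_class ltX.
Proof.
move=> one x y; apply: (countable_preimage (f := e)) (one (e x) (e y)).
  by move=> z [] [/embedding_leo xz /embedding_leo zy]; [left|right].
by move=> a b _ _; apply: embedding_inj.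
Qed.

End Embedding.

Section Omega1.
Variables (W : Type) (ltW : W -> W -> Prop) (HW : is_omega1 ltW).

Lemma omega1_lin : strict_linear ltW.
Proof. by case: HW => [[]]. Qed.

Lemma omega1_wf : well_founded ltW.
Proof. by case: HW => [[]]. Qed.

Lemma omega1_uncountable : ~ countable_set (fun _ : W => True).
Proof. by case: HW => _ []. Qed.

Lemma omega1_initial_countable w : countable_set (fun v => ltW v w).
Proof. by case: HW => _ []. Qed.

Lemma omega1_inhabited : inhabited W.
Proof.
apply: NNPP => empty; apply: omega1_uncountable.
by exists (fun _ => 0%N) => w; case: empty.
Qed.

Lemma omega1_final_uncountable w : ~ countable_set (fun v => ltW w v).
Proof.
move=> c_final; apply: omega1_uncountable.
apply: (countable_sub (B := fun v => (ltW v w \/ v = w) \/ ltW w v)).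
  by move=> v _; case: (lin_tri omega1_lin v w); tauto.
apply: countable_union => //.
by apply: countable_union; [exact: omega1_initial_countable|exact: countable_set1].
Qed.

Lemma omega1_least (Q : W -> Prop) : (exists w, Q w) ->
  exists w, Q w /\ forall v, ltW v w -> ~ Q v.
Proof.
move=> [w Qw]; apply: NNPP => no_least; move: Qw.
elim/(well_founded_ind omega1_wf): w => w IH Qw; apply: no_least.
by exists w; split=> // v vw; apply: IH.
Qed.

(* Transfinite recursion: [f w] is chosen above all [f v], [v < w]. *)
Lemma omega1_incr_seq (X : Type) (lt : X -> X -> Prop) :
  (forall C : X -> Prop, countable_set C -> exists x, forall c, C c -> lt c x) ->
  exists f : W -> X, incr ltW lt f.
Proof.
move=> ub; have [x0 _] : exists x, forall c, False -> lt c x.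
  by apply: ub; exists (fun _ => 0%N).
have inhX : inhabited X by constructor.
pose F (w : W) (r : forall v, ltW v w -> X) : X :=
  epsilon inhX (fun x => forall v (h : ltW v w), lt (r v h) x).
pose f := Fix omega1_wf (fun _ => X) F.
have fE w : f w = F w (fun v _ => f v).
  rewrite /f Fix_eq // => w' r1 r2 eq_r; congr F.
  apply: functional_extensionality_dep => v.
  by apply: functional_extensionality_dep => h; apply: eq_r.
exists f => v w vw; rewrite (fE w) /F.
have : exists x, forall u (h : ltW u w), lt (f u) x.
  have [x ub_x] := ub _ (countable_image f (omega1_initial_countable w)).
  by exists x => u uw; apply: ub_x; exists u.
by move/(epsilon_spec inhX); apply.
Qed.

Lemma omega1_incr_seq_of_uncountable (X : Type) (lt : X -> X -> Prop)
    (P : X -> Prop) :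
  strict_linear lt -> ~ countable_set P ->
  (forall c, countable_set (fun x => P x /\ leo lt x c)) ->
  exists f : W -> X, incr ltW lt f.
Proof.
by move=> HX P_unc P_low; apply/omega1_incr_seq/(uncountable_strict_ub HX P_unc).
Qed.

End Omega1.

Section IncreasingSequences.
Variables (W : Type) (ltW : W -> W -> Prop) (HW : is_omega1 ltW).
Variables (X : Type) (lt : X -> X -> Prop) (HX : strict_linear lt).

Lemma incr_inj (f : W -> X) : incr ltW lt f -> forall a b, f a = f b -> a = b.
Proof.
move=> f_incr a b fab; case: (lin_tri (omega1_lin HW) a b) => [|[//|]] /f_incr;
  by rewrite fab => /(lin_irr HX).
Qed.

Hypothesis one : one_class lt.

Lemma incr_omega1_unbounded (f : W -> X) : incr ltW lt f ->
  forall y, exists w, lt y (f w).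
Proof.
move=> f_incr y; apply: NNPP => bounded; have [w0] := omega1_inhabited HW.
apply: (omega1_final_uncountable HW (w := w0)).
apply: (countable_preimage (f := f) (B := cint lt (f w0) y)) (one _ _); last first.
  by move=> a b _ _; apply: incr_inj.
move=> v w0v; left; split; first by left; apply: f_incr.
by apply: leo_of_nlt => // yfv; apply: bounded; exists v.
Qed.

Lemma incr_omega1_tail_uncountable (f : W -> X) : incr ltW lt f ->
  forall T, is_tail lt T -> ~ countable_set T.
Proof.
move=> f_incr T [[x Tx] T_up] cT.
have [w xfw] := incr_omega1_unbounded f_incr x.
apply: (omega1_final_uncountable HW (w := w)).
apply: (countable_preimage (f := f) (B := T)) cT; last first.
  by move=> a b _ _; apply: incr_inj.
by move=> v wv; apply: (T_up x) => //; exact: (lin_trans HX xfw (f_incr _ _ wv)).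
Qed.

Lemma cf_omega1_of_tails : inhabited X ->
  (forall T, is_tail lt T -> ~ countable_set T) -> cf_omega1 ltW lt.
Proof.
move=> [x0] tails; have tail_unc := tails _ (tail_above x0 HX).
have tail_low c : countable_set (fun x => leo lt x0 x /\ leo lt x c).
  by apply: countable_sub (one x0 c) => x; left.
split.
  have [f f_incr] := omega1_incr_seq_of_uncountable HW HX tail_unc tail_low.
  exists f; split=> // y; have [w yfw] := incr_omega1_unbounded f_incr y.
  by exists w; left.
move=> A ltA _ cA [g [_ g_cof]].
have [x ub_x] := uncountable_strict_ub HX tail_unc tail_low (countable_image g cA).
have [a [x_ga|x_ga]] := g_cof x; have ga_x : lt (g a) x by apply: ub_x; exists a.
- exact: (lin_asym HX x_ga ga_x).
- by rewrite x_ga in ga_x; exact: (lin_irr HX ga_x).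
Qed.

Lemma tails_of_cf_omega1 : cf_omega1 ltW lt ->
  forall T, is_tail lt T -> ~ countable_set T.
Proof. by move=> [[f [f_incr _]] _]; apply: incr_omega1_tail_uncountable f_incr. Qed.

End IncreasingSequences.

Section RatLabels.
Local Open Scope ring_scope.

Definition seq_max (a : rat) (s : seq rat) := foldr Num.max a s.
Definition seq_min (a : rat) (s : seq rat) := foldr Num.min a s.

Lemma seq_max_ub a s x : x \in a :: s -> x <= seq_max a s.
Proof.
rewrite /seq_max; elim: s x => [|b s IH] x; first by rewrite inE => /eqP->.
rewrite /= le_max !inE => /or3P [/eqP->|/eqP->|xs].
- by rewrite (IH a) ?inE ?eqxx ?orbT.
- by rewrite lexx.
- by rewrite (IH x) ?inE ?xs ?orbT.
Qed.

Lemma seq_max_mem a s : seq_max a s \in a :: s.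
Proof.
rewrite /seq_max; elim: s => [|b s IH] /=; first by rewrite inE.
rewrite maxEle; case: ifP => _; rewrite !inE ?eqxx ?orbT //.
by move: IH; rewrite inE => /orP [->|->]; rewrite ?orbT.
Qed.

Lemma seq_min_lb a s x : x \in a :: s -> seq_min a s <= x.
Proof.
rewrite /seq_min; elim: s x => [|b s IH] x; first by rewrite inE => /eqP->.
rewrite /= ge_min !inE => /or3P [/eqP->|/eqP->|xs].
- by rewrite (IH a) ?inE ?eqxx ?orbT.
- by rewrite lexx.
- by rewrite (IH x) ?inE ?xs ?orbT.
Qed.

Lemma seq_min_mem a s : seq_min a s \in a :: s.
Proof.
rewrite /seq_min; elim: s => [|b s IH] /=; first by rewrite inE.
rewrite minEle; case: ifP => _; rewrite !inE ?eqxx ?orbT //.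
by move: IH; rewrite inE => /orP [->|->]; rewrite ?orbT.
Qed.

Definition rat_between (los his : seq rat) : rat :=
  match los, his with
  | [::], [::] => 0
  | a :: s, [::] => seq_max a s + 1
  | [::], b :: t => seq_min b t - 1
  | a :: s, b :: t => (seq_max a s + seq_min b t) / 2%:R
  end.

Lemma rat_betweenP los his :
  (forall l h, l \in los -> h \in his -> l < h) ->
  (forall l, l \in los -> l < rat_between los his) /\
  (forall h, h \in his -> rat_between los his < h).
Proof.
case: los => [|a s]; case: his => [|b t] //= lo_hi.
- by split=> // h /seq_min_lb; lra.
- by split=> // l /seq_max_ub; lra.
- have := lo_hi _ _ (seq_max_mem a s) (seq_min_mem b t).
  by split=> [l /seq_max_ub|h /seq_min_lb]; lra.
Qed.

Variable R : nat -> nat -> Prop.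
Hypothesis R_trans : forall i j k, R i j -> R j k -> R i k.
Hypothesis R_irr : forall i, ~ R i i.

(* [rat_labels n] labels [0, ..., n-1]; label [n] is placed strictly between
   the labels of the earlier [R]-predecessors and [R]-successors of [n]. *)
Fixpoint rat_labels (n : nat) : seq rat :=
  if n is n'.+1 then
    let s := rat_labels n' in
    rcons s (rat_between [seq nth 0 s i | i <- iota 0 n' & classicb (R i n')]
                         [seq nth 0 s i | i <- iota 0 n' & classicb (R n' i)])
  else [::].

Lemma size_rat_labels n : size (rat_labels n) = n.
Proof. by elim: n => //= n IH; rewrite size_rcons IH. Qed.

Lemma nth_rat_labels m i : (i < m)%N ->
  nth 0 (rat_labels m) i = nth 0 (rat_labels i.+1) i.
Proof.
elim: m => // m IH; rewrite ltnS leq_eqVlt => /orP [/eqP -> //|lt_im].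
by rewrite /= nth_rcons size_rat_labels lt_im IH.
Qed.

Lemma rat_labels_incr m i j : (i < m)%N -> (j < m)%N -> R i j ->
  nth 0 (rat_labels m) i < nth 0 (rat_labels m) j.
Proof.
elim: m i j => // m IH i j; set s := rat_labels m.
set los := [seq nth 0 s i | i <- iota 0 m & classicb (R i m)].
set his := [seq nth 0 s i | i <- iota 0 m & classicb (R m i)].
have [lo_new new_hi] : (forall l, l \in los -> l < rat_between los his) /\
                       (forall h, h \in his -> rat_between los his < h).
  apply: rat_betweenP => l h /mapP [i' + ->] /mapP [j' + ->].
  rewrite !mem_filter !mem_iota /= => /andP [/classicbP i'm lt_i'] /andP [/classicbP mj' lt_j'].
  by apply: IH => //; apply: R_trans i'm mj'.
rewrite /= -/s -/los -/his !nth_rcons size_rat_labels !ltnS (leq_eqVlt i) (leq_eqVlt j).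
move=> /orP [/eqP ei|lt_i] /orP [/eqP ej|lt_j] Rij.
- by subst; case: (R_irr Rij).
- rewrite lt_j ei ltnn eqxx; subst i; apply: new_hi; apply/mapP; exists j => //.
  by rewrite mem_filter mem_iota /= lt_j andbT; apply/classicbP.
- rewrite lt_i ej ltnn eqxx; subst j; apply: lo_new; apply/mapP; exists i => //.
  by rewrite mem_filter mem_iota /= lt_i andbT; apply/classicbP.
- by rewrite lt_i lt_j; apply: IH.
Qed.

Lemma nat_strict_order_into_rat :
  exists v : nat -> rat, forall i j, R i j -> v i < v j.
Proof.
exists (fun i => nth 0 (rat_labels i.+1) i) => i j Rij.
rewrite -(@nth_rat_labels (maxn i j).+1 i) ?ltnS ?leq_maxl //.
rewrite -(@nth_rat_labels (maxn i j).+1 j) ?ltnS ?leq_maxr //.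
by apply: rat_labels_incr; rewrite ?ltnS ?leq_maxl ?leq_maxr.
Qed.

End RatLabels.

Definition embeds_on (X Y : Type) (ltX : X -> X -> Prop) (ltY : Y -> Y -> Prop)
    (P : X -> Prop) : Prop :=
  exists e : X -> Y, forall x y, P x -> P y -> (ltX x y <-> ltY (e x) (e y)).

Lemma countable_embeds_on_rat (X : Type) (lt : X -> X -> Prop) (B : X -> Prop) :
  strict_linear lt -> countable_set B -> embeds_on lt rat_lt B.
Proof.
move=> HX [g g_inj].
pose R i j := exists x y, [/\ B x, B y, g x = i, g y = j & lt x y].
have R_trans i j k : R i j -> R j k -> R i k.
  move=> [x [y [Bx By <- <- xy]]] [y' [z [By' Bz eq_y <- yz]]].
  rewrite (g_inj _ _ By' By eq_y) in yz.
  by exists x, z; split=> //; exact: (lin_trans HX xy yz).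
have R_irr i : ~ R i i.
  move=> [x [y [Bx By gx gy xy]]]; rewrite (g_inj x y) ?gx ?gy // in xy.
  exact: (lin_irr HX xy).
have [v v_incr] := nat_strict_order_into_rat R_trans R_irr.
exists (v \o g); apply: (incr_on_iff HX rat_lin) => x y Bx By xy.
by apply: v_incr; exists x, y.
Qed.

Lemma embeds_glue (X Z : Type) (lt : X -> X -> Prop) (ltZ : Z -> Z -> Prop)
    (P : X -> Prop) (eP eQ : X -> Z) :
  strict_linear lt -> strict_linear ltZ ->
  (forall x y, P x -> ~ P y -> lt x y) ->
  (forall x y, P x -> P y -> (lt x y <-> ltZ (eP x) (eP y))) ->
  (forall x y, ~ P x -> ~ P y -> (lt x y <-> ltZ (eQ x) (eQ y))) ->
  (forall x y, P x -> ~ P y -> ltZ (eP x) (eQ y)) ->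
  order_embeds lt ltZ.
Proof.
move=> HX HZ P_head eP_iff eQ_iff eP_eQ.
pose e x := if classicb (P x) then eP x else eQ x.
exists e => x y; apply: (incr_on_iff HX HZ (P := fun _ => True) (f := e)) => //.
move=> {}x {}y _ _ xy; rewrite /e.
case: classicbP => Px; case: classicbP => Py.
- exact/eP_iff.
- exact: eP_eQ.
- by case: (lin_asym HX xy (P_head _ _ Py Px)).
- exact/eQ_iff.
Qed.

Section IntoU.
Variables (W : Type) (ltW : W -> W -> Prop) (HW : is_omega1 ltW).

Lemma R_lin : strict_linear (R_lt ltW).
Proof. exact: lex_lin (omega1_lin HW) ptQ_lin. Qed.

Lemma U_lin : strict_linear (U_lt ltW).
Proof. exact: sum_lin (rev_lin R_lin) (sum_lin rat_lin R_lin). Qed.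

(* The block of [w] consists of the [x] below [f w] but below no earlier
   [f v]; it is countable, so it embeds into the copy [Q(w)] of the rationals. *)
Lemma embeds_on_R (X : Type) (lt : X -> X -> Prop) (f : W -> X) (P : X -> Prop) :
  strict_linear lt -> (forall x, P x -> exists w, lt x (f w)) ->
  (forall w, countable_set (fun x => P x /\ lt x (f w))) ->
  embeds_on lt (R_lt ltW) P.
Proof.
move=> HX f_cof P_low; have [w0] := omega1_inhabited HW.
pose first_above x w := P x -> lt x (f w) /\ forall v, ltW v w -> ~ lt x (f v).
pose level x := epsilon (inhabits w0) (first_above x).
have levelP x : first_above x (level x).
  apply: epsilon_spec; have [Px|nPx] := classic (P x); last first.
    by exists w0 => Px; case: nPx.
  have [w [xfw w_least]] := omega1_least HW (f_cof x Px).
  by exists w => _; split.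
have inhQ : inhabited (X -> rat) by constructor; exact: (fun _ => 0%R).
pose in_block w x := P x /\ level x = w.
pose embeds_block w (q : X -> rat) :=
  forall x y, in_block w x -> in_block w y -> (lt x y <-> rat_lt (q x) (q y)).
pose q w := epsilon inhQ (embeds_block w).
have qP w : embeds_block w (q w).
  apply: epsilon_spec; apply: countable_embeds_on_rat => //.
  by apply: countable_sub (P_low w) => x [Px <-]; split=> //; case: (levelP x Px).
exists (fun x => (level x, Some (q (level x) x))).
apply: (incr_on_iff HX R_lin) => x y Px Py xy; rewrite /R_lt /lex_lt /=.
have [_ x_least] := levelP x Px; have [y_below _] := levelP y Py.
case: (lin_tri (omega1_lin HW) (level x) (level y)) => [|[eq_l|lt_l]]; first by left.
- by right; split=> //; rewrite -eq_l; apply/qP.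
- by case: (x_least _ lt_l); exact: (lin_trans HX xy y_below).
Qed.

Definition U_flip (z : U_type W) : U_type W :=
  match z with
  | inl a => inr (inr a)
  | inr (inl q) => inr (inl (- q)%R)
  | inr (inr a) => inl a
  end.

Lemma U_flip_rev x y : U_lt ltW x y <-> U_lt ltW (U_flip y) (U_flip x).
Proof. by case: x => [a|[q|a]]; case: y => [a'|[q'|a']] //=; rewrite /rat_lt ltrN2. Qed.

Lemma embeds_U_rev (X : Type) (lt : X -> X -> Prop) :
  order_embeds (rev_lt lt) (U_lt ltW) -> order_embeds lt (U_lt ltW).
Proof. by move=> [e e_iff]; exists (U_flip \o e) => x y; rewrite -U_flip_rev -e_iff. Qed.

(* Split at [b := f w0]: above [b] the sequence [f] is cofinal; the part below
   [b] is either countable (and goes to the middle [Q]) or has an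
   omega1-sequence coinitial in it (and goes to [R^*]). *)
Lemma embeds_U_of_incr (X : Type) (lt : X -> X -> Prop) (f : W -> X) :
  strict_linear lt -> one_class lt -> incr ltW lt f -> order_embeds lt (U_lt ltW).
Proof.
move=> HX one f_incr; have [w0] := omega1_inhabited HW; set b := f w0.
have below_b x y : lt x b -> ~ lt y b -> lt x y.
  by move=> xb /(leo_of_nlt HX) [by_|<-] //; exact: (lin_trans HX xb by_).
have [eR eR_iff] : embeds_on lt (R_lt ltW) (fun x => ~ lt x b).
  apply: (embeds_on_R HX (f := f)) => [x _|w].
    exact: (incr_omega1_unbounded HW HX one f_incr x).
  apply: countable_sub (one b (f w)) => x [/(leo_of_nlt HX) bx xfw].
  by left; split=> //; left.
have [cH|uH] := classic (countable_set (fun x => lt x b)).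
- have [eQ eQ_iff] := countable_embeds_on_rat HX cH.
  exact: (embeds_glue (eP := fun x => inr (inl (eQ x)))
    (eQ := fun x => inr (inr (eR x))) HX U_lin below_b eQ_iff eR_iff
    (fun _ _ _ _ => I)).
- have HXr := rev_lin HX.
  have [g g_decr] : exists g : W -> X, incr ltW (rev_lt lt) g.
    apply: (omega1_incr_seq_of_uncountable HW HXr uH) => c.
    apply: countable_sub (one c b) => x [xb /leo_rev cx].
    by left; split=> //; left.
  have [eL eL_iff] : embeds_on (rev_lt lt) (R_lt ltW) (fun x => lt x b).
    apply: (embeds_on_R HXr (f := g)) => [x _|w].
      exact: (incr_omega1_unbounded HW HXr (one_class_rev one) g_decr x).
    by apply: countable_sub (one (g w) b) => x [xb gwx]; left; split; left.
  exact: (embeds_glue (eP := fun x => inl (eL x))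
    (eQ := fun x => inr (inr (eR x))) HX U_lin below_b
    (fun x y xb yb => eL_iff y x yb xb) eR_iff (fun _ _ _ _ => I)).
Qed.

Definition U_level (z : U_type W) : option W :=
  match z with
  | inl (a, _) | inr (inr (a, _)) => Some a
  | inr (inl _) => None
  end.

Definition U_bounded (C : W -> Prop) (z : U_type W) : Prop :=
  if U_level z is Some a then exists c, C c /\ leo ltW a c else True.

Lemma countable_U_bounded C : countable_set C -> countable_set (U_bounded C).
Proof.
move=> cC.
have [g g_inj] : countable_set (fun a => exists c, C c /\ leo ltW a c).
  apply: countable_bigcup => // c _; apply: countable_union.
    exact: omega1_initial_countable.
  exact: countable_set1.
apply: (@countable_countType _ (nat * nat * option rat)%type _
  (fun z => match z with
            | inl (a, o) => (0%N, g a, o)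
            | inr (inl q) => (1%N, 0%N, Some q)
            | inr (inr (a, o)) => (2%N, g a, o)
            end)).
move=> [[a o]|[q|[a o]]] [[a' o']|[q'|[a' o']]] //= Ca Ca'; try by case.
- by case=> /(g_inj _ _ Ca Ca') -> ->.
- by case=> ->.
- by case=> /(g_inj _ _ Ca Ca') -> ->.
Qed.

Definition in_Rstar (z : U_type W) : Prop := exists a o, z = inl (a, o).
Definition in_Q (z : U_type W) : Prop := exists q, z = inr (inl q).
Definition in_R (z : U_type W) : Prop := exists a o, z = inr (inr (a, o)).

Lemma U_cases z : in_Rstar z \/ in_Q z \/ in_R z.
Proof.
case: z => [[a o]|[q|[a o]]].
- by left; exists a, o.
- by right; left; exists q.
- by right; right; exists a, o.
Qed.

Lemma countable_U_Q : countable_set in_Q.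
Proof.
apply: (@countable_countType _ rat _ (fun z => if z is inr (inl q) then q else 0%R)).
by move=> _ _ [q ->] [q' ->] /= ->.
Qed.

Lemma U_ge_R a o z : leo (U_lt ltW) (inr (inr (a, o))) z ->
  exists a' o', z = inr (inr (a', o')) /\ leo ltW a a'.
Proof.
case=> [|<-]; last by exists a, o; split=> //; right.
case: z => [[a' o']|[q|[a' o']]] //= az; exists a', o'; split=> //.
by case: az => [/= ?|[/= -> _]]; [left|right].
Qed.

Lemma U_le_Rstar a o z : leo (U_lt ltW) z (inl (a, o)) ->
  exists a' o', z = inl (a', o') /\ leo ltW a a'.
Proof.
case=> [|->]; last by exists a, o; split=> //; right.
case: z => [[a' o']|[q|[a' o']]] //= za; exists a', o'; split=> //.
by case: za => [/= ?|[/= -> _]]; [left|right].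
Qed.

Lemma countable_U_R_below u :
  countable_set (fun z => in_R z /\ leo (U_lt ltW) z u).
Proof.
apply: (countable_sub (B := U_bounded (fun c => U_level u = Some c))).
  by move=> z [[a [o ->]] /U_ge_R [a' [o' [-> aa']]]]; exists a'.
by apply: countable_U_bounded; exists (fun _ => 0%N) => c d -> [->].
Qed.

Lemma countable_U_Rstar_above u :
  countable_set (fun z => in_Rstar z /\ leo (U_lt ltW) u z).
Proof.
apply: (countable_sub (B := U_bounded (fun c => U_level u = Some c))).
  by move=> z [[a [o ->]] /U_le_Rstar [a' [o' [-> aa']]]]; exists a'.
by apply: countable_U_bounded; exists (fun _ => 0%N) => c d -> [->].
Qed.

Lemma U_one_class : one_class (U_lt ltW).
Proof.
move=> x y; apply: (countable_sub (B := fun z =>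
  ((in_R z /\ leo (U_lt ltW) z x) \/ (in_R z /\ leo (U_lt ltW) z y)) \/
  ((in_Rstar z /\ leo (U_lt ltW) x z) \/ (in_Rstar z /\ leo (U_lt ltW) y z)) \/
  in_Q z)).
  by move=> z xzy; case: (U_cases z); case: xzy; tauto.
do !apply: countable_union;
  by [apply: countable_U_R_below|apply: countable_U_Rstar_above|apply: countable_U_Q].
Qed.

End IntoU.

Section UniversalOrder.
Variables (W : Type) (ltW : W -> W -> Prop) (HW : is_omega1 ltW).
Variables (L : Type) (ltL : L -> L -> Prop) (HL : strict_linear ltL).

Lemma embeds_U_one_class : order_embeds ltL (U_lt ltW) -> one_class ltL.
Proof. by move=> [e e_iff]; apply: (one_class_embedding HL (U_lin HW) e_iff (U_one_class HW)). Qed.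

Lemma uncountable_suborder_U :
  order_embeds ltL (U_lt ltW) ->
  (exists f : W -> L, incr ltW ltL f \/ decr ltW ltL f) ->
  exists S : U_type W -> Prop, ~ countable_set S /\
    order_iso ltL (@sub_lt _ (U_lt ltW) S).
Proof.
move=> [e e_iff] [f f_mono].
have e_inj := embedding_inj HL (U_lin HW) e_iff.
have f_inj : forall a b, f a = f b -> a = b.
  case: f_mono => [f_incr|f_decr]; first exact: (incr_inj HW HL f_incr).
  exact: (incr_inj HW (rev_lin HL) f_decr).
exists (fun z => exists x, e x = z); split.
  move=> cS; apply: (omega1_uncountable HW).
  apply: (countable_preimage (f := e \o f)) cS => [w _|a b _ _ /e_inj /f_inj //].
  by exists (f w).
exists (fun x => exist _ (e x) (ex_intro _ x erefl)); split; [|split].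
- by move=> x y /(f_equal (@proj1_sig _ _)) /e_inj.
- move=> [z Sz]; case: (Sz) => x exz; exists x; subst z.
  by rewrite (proof_irrelevance _ (ex_intro _ x erefl) Sz).
- exact: e_iff.
Qed.

(* [L] is uncountable and its part in the middle [Q] is countable, so its part
   in [R] or in [R^*] is uncountable, and every point bounds only countably
   much of that part. *)
Lemma embeds_U_of_uncountable_suborder :
  (exists S : U_type W -> Prop, ~ countable_set S /\
    order_iso ltL (@sub_lt _ (U_lt ltW) S)) ->
  order_embeds ltL (U_lt ltW) /\
  (exists f : W -> L, incr ltW ltL f \/ decr ltW ltL f).
Proof.
move=> [S [S_unc [phi [_ [phi_surj phi_iff]]]]].
pose e x := proj1_sig (phi x).
have e_iff : forall x y, ltL x y <-> U_lt ltW (e x) (e y) := phi_iff.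
split; first by exists e.
have e_inj := embedding_inj HL (U_lin HW) e_iff.
have preim B : countable_set B -> countable_set (fun x => B (e x)).
  move=> cB; apply: (countable_preimage (f := e) (B := B)) cB => // a b _ _.
  exact: e_inj.
have L_unc : ~ countable_set (fun _ : L => True).
  move=> cL; apply: S_unc; apply: countable_sub (countable_image e cL) => z Sz.
  by have [x phix] := phi_surj (exist _ z Sz); exists x; rewrite /e phix.
have [R_count|R_unc] := classic (countable_set (fun x => in_R (e x))); last first.
  have [f f_incr] : exists f : W -> L, incr ltW ltL f.
    apply: (omega1_incr_seq_of_uncountable HW HL R_unc) => c.
    apply: countable_sub (preim _ (countable_U_R_below HW (e c))) => x [Rx xc].
    by split=> //; exact: (embedding_leo e_iff xc).
  by exists f; left.
have [Rs_count|Rs_unc] := classic (countable_set (fun x => in_Rstar (e x))); last first.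
  have [f f_decr] : exists f : W -> L, incr ltW (rev_lt ltL) f.
    apply: (omega1_incr_seq_of_uncountable HW (rev_lin HL) Rs_unc) => c.
    apply: countable_sub (preim _ (countable_U_Rstar_above HW (e c))).
    by move=> x [Sx /leo_rev cx]; split=> //; exact: (embedding_leo e_iff cx).
  by exists f; right.
case: L_unc.
apply: (countable_sub (B := fun x => (in_Rstar (e x) \/ in_Q (e x)) \/ in_R (e x))).
  by move=> x _; case: (U_cases (e x)); tauto.
apply: countable_union => //; apply: countable_union => //.
exact: (preim _ (countable_U_Q W)).
Qed.

End UniversalOrder.

Definition uncountable_end (L : Type) (lt : L -> L -> Prop) : Prop :=
  (forall T, is_tail lt T -> ~ countable_set T) \/
  (forall H, is_head lt H -> ~ countable_set H).

Lemma rev_tails_uncountable (X : Type) (lt : X -> X -> Prop) :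
  (forall T, is_tail (rev_lt lt) T -> ~ countable_set T) <->
  (forall H, is_head lt H -> ~ countable_set H).
Proof. by split=> unc H /head_rev; apply: unc. Qed.

Section LexCondensation.
Variables (M : Type) (ltM : M -> M -> Prop) (HM : strict_linear ltM).
Variables (L : Type) (ltL : L -> L -> Prop) (HL : strict_linear ltL).
Hypotheses (inhL : inhabited L) (one : one_class ltL).
Hypothesis long_end : uncountable_end ltL.

Let lx := lex_lt ltM ltL.

Lemma leo_lex_fst p q : leo lx p q -> leo ltM p.1 q.1.
Proof. by case=> [[pq|[-> _]]|->]; [left|right|right]. Qed.

Lemma leo_lex_snd m l l' : leo lx (m, l) (m, l') -> leo ltL l l'.
Proof. by case=> [[/(lin_irr HM) []|[_ ll']]|[->]]; [left|right]. Qed.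

Lemma lex_between m l l' z : leo lx (m, l) z -> leo lx z (m, l') ->
  z.1 = m /\ leo ltL l z.2 /\ leo ltL z.2 l'.
Proof.
case: z => [m1 l1] lz zl.
have eq_m : m1 = m := leo_antisym HM (leo_lex_fst zl) (leo_lex_fst lz).
by move: lz zl; rewrite eq_m => /leo_lex_snd lz /leo_lex_snd zl.
Qed.

Lemma lex_cint_fiber m l l' z :
  cint lx (m, l) (m, l') z -> z.1 = m /\ cint ltL l l' z.2.
Proof.
case=> [[lz zl]|[lz zl]].
- by have [-> [? ?]] := lex_between lz zl; split=> //; left.
- by have [-> [? ?]] := lex_between lz zl; split=> //; right.
Qed.

Lemma lex_not_csim p q : ltM p.1 q.1 -> ~ csim lx p q.
Proof.
case: p q => [m l] [m' l'] /= mm' c.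
case: long_end => [tails|heads].
- apply: (tails _ (tail_above l HL)).
  apply: (countable_preimage (f := fun z => (m, z))) c => [z lz|a b _ _ [] //].
  left; split; last by left; left.
  by case: lz => [lz|<-]; [left; right|right].
- apply: (heads _ (head_below l' HL)).
  apply: (countable_preimage (f := fun z => (m', z))) c => [z zl|a b _ _ [] //].
  left; split; first by left; left.
  by case: zl => [zl|->]; [left; right|right].
Qed.

Lemma csim_lex p q : csim lx p q <-> p.1 = q.1.
Proof.
split=> [c|]; last first.
  case: p q => [m l] [m' l'] /= <-.
  apply: (countable_preimage (f := snd) (B := cint ltL l l')) (one l l').
    by move=> z /lex_cint_fiber [].
  by move=> [m1 l1] [m2 l2] /lex_cint_fiber [/= -> _] /lex_cint_fiber [/= -> _] /= ->.
case: (lin_tri HM p.1 q.1) => [pq|[//|qp]]; first by case: (lex_not_csim pq).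
by case: (lex_not_csim qp); apply: countable_sub c => z; exact: cint_sym.
Qed.

Lemma cquot_lex : cquot_iso lx ltM.
Proof.
have [l0] := inhL.
pose rep (C : cclass lx) :=
  proj1_sig (constructive_indefinite_description _ (proj2_sig C)).
have memC (C : cclass lx) z : proj1_sig C z <-> (rep C).1 = z.1.
  rewrite (proj2_sig (constructive_indefinite_description _ (proj2_sig C))).
  exact: csim_lex.
have C_eq (C D : cclass lx) : (rep C).1 = (rep D).1 -> C = D.
  move=> eq_CD; apply: cclass_inj; apply: functional_extensionality => z.
  by apply: propositional_extensionality; rewrite !memC eq_CD.
exists (fun C => (rep C).1); split; [exact: C_eq|split].
- move=> m; exists (cclass_of lx (m, l0)).
  by apply: (proj1 (memC _ (m, l0))); apply/csim_lex.
- move=> C D; split.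
  + move=> [neq [x [y [/memC Cx [/memC Dy [xy|[eq_xy _]]]]]]]; first by rewrite Cx Dy.
    by case: neq; rewrite (C_eq C D) // Cx Dy eq_xy.
  + move=> lt_CD; split.
      by move=> /cclass_inj eq_CD; rewrite eq_CD in lt_CD; exact: (lin_irr HM lt_CD).
    by exists (rep C), (rep D); split; [apply/memC|split; [apply/memC|left]].
Qed.

End LexCondensation.

Lemma countable_of_head_tail (X : Type) (lt : X -> X -> Prop) (H T : X -> Prop) :
  strict_linear lt -> one_class lt -> is_head lt H -> is_tail lt T ->
  countable_set H -> countable_set T -> countable_set (fun _ : X => True).
Proof.
move=> HX one [[h Hh] H_down] [[t Tt] T_up] cH cT.
apply: (countable_sub (B := fun x => (H x \/ cint lt h t x) \/ T x)).
  move=> x _; have [Hx|nHx] := classic (H x); first by left; left.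
  have [Tx|nTx] := classic (T x); first by right.
  left; right; left; split; apply: (leo_of_nlt HX).
  - by move=> xh; apply: nHx; exact: H_down xh.
  - by move=> tx; apply: nTx; exact: T_up tx.
by apply: countable_union => //; apply: countable_union => //; apply: one.
Qed.

(* With [M = 1] condition (1) forces [L / ~omega = 1]; with [M = omega] it
   excludes a countable [L], i.e. a countable head together with a countable
   tail. *)
Lemma uncountable_end_of_lex_quot (L : Type) (ltL : L -> L -> Prop) :
  strict_linear ltL ->
  (forall (M : Type) (ltM : M -> M -> Prop), strict_linear ltM ->
     cquot_iso (lex_lt ltM ltL) ltM) ->
  cquot_iso ltL one_lt /\ uncountable_end ltL.
Proof.
move=> HL P1.
have [[[_ l0]] one1] := proj1 (cquot_one_iff (lex_lin one_lin HL)) (P1 _ _ one_lin).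
have one : one_class ltL.
  apply: (one_class_embedding HL (lex_lin one_lin HL) (e := fun l => (tt, l))) one1.
  by move=> x y; rewrite /lex_lt /one_lt /=; intuition.
split; first by apply/(cquot_one_iff HL); split=> //; constructor.
apply: NNPP => no_long.
have [T [tail_T cT]] : exists T, is_tail ltL T /\ countable_set T.
  by apply: NNPP => nT; apply: no_long; left => T tT cT; apply: nT; exists T.
have [H [head_H cH]] : exists H, is_head ltL H /\ countable_set H.
  by apply: NNPP => nH; apply: no_long; right => H hH cH; apply: nH; exists H.
have [g g_inj] := countable_of_head_tail HL one head_H tail_T cH cT.
have one_nat : one_class (lex_lt (fun m n : nat => (m < n)%N) ltL).
  move=> x y; apply: (@countable_countType _ (nat * nat)%type _ (fun p => (p.1, g p.2))).
  by move=> [a1 a2] [b1 b2] _ _ [/= -> /(g_inj _ _ I I) ->].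
have [F [_ [F_surj _]]] := P1 _ _ nat_lin.
have [C0 FC0] := F_surj 0%N; have [C1 FC1] := F_surj 1%N.
by move: FC0 FC1; rewrite (one_class_cclass_eq one_nat C0 C1) => ->.
Qed.

Section Equivalences.
Variables (W : Type) (ltW : W -> W -> Prop) (HW : is_omega1 ltW).
Variables (L : Type) (ltL : L -> L -> Prop) (HL : strict_linear ltL).
Hypothesis one : one_class ltL.

Lemma cf_omega1_of_uncountable_end : inhabited L -> uncountable_end ltL ->
  cf_omega1 ltW ltL \/ cfstar_omega1 ltW ltL.
Proof.
move=> inhL [tails|heads]; [left|right].
- exact: (cf_omega1_of_tails HW HL one inhL tails).
- apply: (cf_omega1_of_tails HW (rev_lin HL) (one_class_rev one) inhL).
  exact/rev_tails_uncountable.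
Qed.

Lemma uncountable_end_of_cf_omega1 :
  cf_omega1 ltW ltL \/ cfstar_omega1 ltW ltL -> uncountable_end ltL.
Proof.
move=> [cf|cfs]; [left|right].
- exact: (tails_of_cf_omega1 HW HL one cf).
- apply/rev_tails_uncountable.
  exact: (tails_of_cf_omega1 HW (rev_lin HL) (one_class_rev one) cfs).
Qed.

Lemma embeds_U_of_cf_omega1 : cf_omega1 ltW ltL \/ cfstar_omega1 ltW ltL ->
  order_embeds ltL (U_lt ltW) /\
  (exists f : W -> L, incr ltW ltL f \/ decr ltW ltL f).
Proof.
move=> [[[f [f_incr _]] _]|[[f [f_decr _]] _]].
- by split; [exact: (embeds_U_of_incr HW HL one f_incr)|exists f; left].
- split; last by exists f; right.
  apply: embeds_U_rev.
  exact: (embeds_U_of_incr HW (rev_lin HL) (one_class_rev one) f_decr).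
Qed.

End Equivalences.

Lemma uncountable_end_of_embeds_U (W : Type) (ltW : W -> W -> Prop)
    (L : Type) (ltL : L -> L -> Prop) :
  is_omega1 ltW -> strict_linear ltL ->
  order_embeds ltL (U_lt ltW) ->
  (exists f : W -> L, incr ltW ltL f \/ decr ltW ltL f) ->
  cquot_iso ltL one_lt /\ uncountable_end ltL.
Proof.
move=> HW HL emb [f f_mono]; have one := embeds_U_one_class HW HL emb.
have [w0] := omega1_inhabited HW.
split; first by apply/(cquot_one_iff HL); split=> //; constructor; exact: f w0.
case: f_mono => [f_incr|f_decr]; [left|right].
- exact: (incr_omega1_tail_uncountable HW HL one f_incr).
- apply/rev_tails_uncountable.
  exact: (incr_omega1_tail_uncountable HW (rev_lin HL) (one_class_rev one) f_decr).
Qed.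

Theorem theorem4p5
  (W : Type) (ltW : W -> W -> Prop) (HW : is_omega1 ltW)
  (L : Type) (ltL : L -> L -> Prop) (HL : strict_linear ltL) :
  let P1 := forall (M : Type) (ltM : M -> M -> Prop), strict_linear ltM ->
              cquot_iso (lex_lt ltM ltL) ltM in
  let P2 := cquot_iso ltL one_lt /\
            (cf_omega1 ltW ltL \/ cfstar_omega1 ltW ltL) in
  let P3 := cquot_iso ltL one_lt /\
            ((forall T, is_tail ltL T -> ~ countable_set T) \/
             (forall H, is_head ltL H -> ~ countable_set H)) in
  let P4 := order_embeds ltL (U_lt ltW) /\
            (exists f : W -> L, incr ltW ltL f \/ decr ltW ltL f) in
  let P5 := exists S : U_type W -> Prop, ~ countable_set S /\
              order_iso ltL (@sub_lt _ (U_lt ltW) S) in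
  (P1 <-> P2) /\ (P2 <-> P3) /\ (P3 <-> P4) /\ (P4 <-> P5).
Proof.
move=> P1 P2 P3 P4 P5; have one_of_quot := proj1 (cquot_one_iff HL).
have p1p3 : P1 -> P3 := uncountable_end_of_lex_quot HL.
have p3p2 : P3 -> P2.
  move=> [quot ends]; split=> //; have [inhL one] := one_of_quot quot.
  exact: (cf_omega1_of_uncountable_end HW HL one inhL ends).
have p2p1 : P2 -> P1.
  move=> [quot cf] M ltM HM; have [inhL one] := one_of_quot quot.
  exact: (cquot_lex HM HL inhL one (uncountable_end_of_cf_omega1 HW HL one cf)).
have p2p4 : P2 -> P4.
  by move=> [/one_of_quot [_ one]]; apply: (embeds_U_of_cf_omega1 HW HL one).
have p4p3 : P4 -> P3 by move=> [emb f]; apply: (uncountable_end_of_embeds_U HW HL).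
split; [|split; [|split]].
- by split=> [/p1p3/p3p2|/p2p1].
- by split=> [/p2p1/p1p3|/p3p2].
- by split=> [/p3p2/p2p4|/p4p3].
- split=> [[emb f]|]; last exact: (embeds_U_of_uncountable_suborder HW HL).
  exact: (uncountable_suborder_U HW HL emb f).
Qed.
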